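(* Let $N\ge 2$, $d\ge 1$, $1\le p\le q\le\infty$, and let $\Sigma\subset\mathbb{Z}_N^d$ be a nonempty set for which a $(p,q)$-restriction estimate holds with constant $C_{p,q}>0$. Let $f:\mathbb{Z}_N^d\to\mathbb{C}$ be a nonzero function supported in $E\subset\mathbb{Z}_N^d$ whose Fourier transform $\hat f$ is supported in $\Sigma$. Then $$|E|^{1/p}\cdot|\Sigma|\ \ge\ \frac{N^d}{C_{p,q}}.$$
   Context: $\mathbb{Z}_N$ is the cyclic group of order $N$, $\chi(t)=e^{2\pi i t/N}$ for $t\in\mathbb{Z}_N$, and $x\cdot m=\sum_i x_im_i$ (mod $N$). The Fourier transform of $f:\mathbb{Z}_N^d\to\mathbb{C}$ is $\hat f(m)=N^{-d}\sum_{x\in\mathbb{Z}_N^d}\chi(-x\cdot m)f(x)$, so that $f(x)=\sum_{m}\chi(x\cdot m)\hat f(m)$ and $\sum_x|f(x)|^2=N^d\sum_m|\hat f(m)|^2$. ''Supported in $E$'' means $f(x)=0$ for $x\notin E$. A $(p,q)$-restriction estimate holds for a nonempty $S\subset\mathbb{Z}_N^d$ with constant $C_{p,q}$ if for every $g:\mathbb{Z}_N^d\to\mathbb{C}$, $$\Big(\frac{1}{|S|}\sum_{m\in S}|\hat g(m)|^q\Big)^{1/q}\le C_{p,q}\,N^{-d}\Big(\sum_{x\in\mathbb{Z}_N^d}|g(x)|^p\Big)^{1/p},$$ where for $q=\infty$ the left side means $\max_{m\in S}|\hat g(m)|$. *)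

From mathcomp Require Import all_boot all_order all_algebra.
From mathcomp Require Import all_classical all_reals all_analysis complex.
Set Implicit Arguments. Unset Strict Implicit. Unset Printing Implicit Defensive.
Import Order.TTheory GRing.Theory Num.Theory.
Local Open Scope ring_scope.

Definition ZNd (N d : nat) : finType := {ffun 'I_d -> 'I_N}.

(* x . m computed in nat; chi is N-periodic, so reduction mod N is irrelevant. *)
Definition dotZ (N d : nat) (x m : ZNd N d) : nat := (\sum_(i < d) (x i * m i))%N.

Definition chi (R : realType) (N : nat) (t : int) : R[i] :=
  Complex (cos (2 * pi * t%:~R / N%:R)) (sin (2 * pi * t%:~R / N%:R)).

Definition fourier (R : realType) (N d : nat) (f : ZNd N d -> R[i]) (m : ZNd N d) : R[i] :=
  (N%:R ^+ d)^-1 * \sum_(x : ZNd N d) chi R N (- (dotZ x m)%:Z) * f x.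

Definition cabs (R : realType) (z : R[i]) : R := Normc.normc z.

Definition lp_sum (R : realType) (T : finType) (p : \bar R) (h : T -> R) : R :=
  match p with
  | +oo%E => \big[Num.max/0]_(x : T) h x
  | EFin r => (\sum_(x : T) h x `^ r) `^ r^-1
  | -oo%E => 0
  end.

Definition lq_avg (R : realType) (T : finType) (q : \bar R) (S : {set T}) (h : T -> R) : R :=
  match q with
  | +oo%E => \big[Num.max/0]_(m in S) h m
  | EFin r => ((#|S|%:R)^-1 * \sum_(m in S) h m `^ r) `^ r^-1
  | -oo%E => 0
  end.

Definition restriction_estimate (R : realType) (N d : nat) (p q : \bar R)
    (S : {set ZNd N d}) (C : R) : Prop :=
  forall g : ZNd N d -> R[i],
    lq_avg q S (fun m => cabs (fourier g m))
      <= C * (N%:R ^+ d)^-1 * lp_sum p (fun x => cabs (g x)).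

Definition inv_exp (R : realType) (p : \bar R) : R :=
  match p with EFin r => r^-1 | _ => 0 end.

(* By Fourier inversion,
   |f(x)| <= sum_{m in Sigma} |f^(m)|; by the power-mean inequality this sum is at
   most |Sigma| times the L^q average of f^ over Sigma, which the restriction
   estimate bounds by |Sigma| C N^{-d} ||f||_p; and since f lives on E,
   ||f||_p <= |E|^{1/p} ||f||_oo. Taking x where |f| is maximal and dividing by
   ||f||_oo > 0 gives N^d <= C |E|^{1/p} |Sigma|. *)
From mathcomp Require Import all_boot all_order all_algebra.
From mathcomp Require Import all_classical all_reals all_analysis complex.
From mathcomp Require Import ring lra zify.
Import Order.TTheory GRing.Theory Num.Theory.
Local Open Scope ring_scope.

Section ComplexModulus.
Context {R : realType}.
Local Open Scope complex_scope.

Lemma cabsE (z : R[i]) : `|z| = (cabs z)%:C.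
Proof. by rewrite normc_def; case: z. Qed.

Lemma cabs_ge0 (z : R[i]) : 0 <= cabs z.
Proof. by case: z => a b; apply: sqrtr_ge0. Qed.

Lemma cabs_eq0 (z : R[i]) : (cabs z == 0) = (z == 0).
Proof. by apply/eqP/eqP => [|->]; [apply: Normc.eq0_normc | apply: Normc.normc0]. Qed.

Lemma cabsM (x y : R[i]) : cabs (x * y) = cabs x * cabs y.
Proof. exact: Normc.normcM. Qed.

Lemma cabs_sum (I : finType) (P : pred I) (F : I -> R[i]) :
  cabs (\sum_(i | P i) F i) <= \sum_(i | P i) cabs (F i).
Proof.
rewrite -lecR -cabsE; apply: le_trans (ler_norm_sum _ _ _) _.
by rewrite rmorph_sum /=; apply: ler_sum => i _; rewrite cabsE.
Qed.

End ComplexModulus.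

Section Character.
Context {R : realType}.
Variable N : nat.
Local Notation chi := (chi R N).

Lemma chiD a b : chi (a + b) = chi a * chi b.
Proof.
rewrite /chi rmorphD /= mulrDr mulrDl cosD sinD; simpc.
by apply/eqP; rewrite eq_complex /=; apply/andP; split; apply/eqP; ring.
Qed.

Lemma chi0 : chi 0 = 1.
Proof. by rewrite /chi mulr0 mul0r cos0 sin0. Qed.

Lemma cabs_chi a : cabs (chi a) = 1.
Proof. by rewrite /cabs /chi /= cos2Dsin2 sqrtr1. Qed.

Lemma chiN a : chi (- a) = (chi a)^-1.
Proof.
have chi_neq0 : chi a != 0 by rewrite -cabs_eq0 cabs_chi oner_eq0.
by apply: (mulIf chi_neq0); rewrite -chiD addNr chi0 mulVf.
Qed.

Lemma chiMn a n : chi (a *+ n) = chi a ^+ n.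
Proof. by elim: n => [|n IHn]; rewrite ?chi0 // mulrS chiD IHn exprS. Qed.

Lemma chi_sum (I : finType) (F : I -> int) : chi (\sum_i F i) = \prod_i chi (F i).
Proof. exact: (big_morph chi chiD chi0). Qed.

Hypothesis N_gt0 : (0 < N)%N.

Lemma chiXN a : chi a ^+ N = 1.
Proof.
have chi_natN (n : nat) : chi (n%:Z *+ N) = 1.
  have -> : n%:Z *+ N = N%:Z *+ n by lia.
  rewrite chiMn /chi mulfK ?pnatr_eq0 -?lt0n //.
  by rewrite mulr_natl cos2pi sin2pi expr1n.
rewrite -chiMn; case: a => n; first exact: chi_natN.
by rewrite NegzE mulNrn chiN chi_natN invr1.
Qed.

(* chi k = e^{2 i x} with x = pi k / N in (0, pi), whose real part is 1 - 2 sin^2 x < 1. *)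
Lemma chi_neq1 (k : nat) : (0 < k < N)%N -> chi k%:Z != 1.
Proof.
move=> /andP[k_gt0 k_ltN].
pose x : R := pi * k%:R / N%:R.
have x_gt0 : 0 < x by rewrite divr_gt0 ?mulr_gt0 ?pi_gt0 ?ltr0n.
have x_ltpi : x < pi by rewrite ltr_pdivrMr ?ltr0n // ltr_pM2l ?pi_gt0 ?ltr_nat.
have sinx_gt0 : 0 < sin x by apply: sin_gt0_pi; rewrite x_gt0 x_ltpi.
have -> : chi k%:Z = Complex (cos (x *+ 2)) (sin (x *+ 2)).
  by rewrite /chi /x mulr2n; congr (Complex (cos _) (sin _)); ring.
apply/negP => /eqP[]; rewrite cos_mulr2n cos2sin2 => cos2x1 _.
have : 0 < sin x ^+ 2 by rewrite exprn_gt0.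
by move: cos2x1; rewrite mulr2n; lra.
Qed.

Lemma sum_chi_mul_ord (a : int) : (`|a| < N)%N ->
  \sum_(k < N) chi (a * (k : nat)%:Z) = if a == 0 then N%:R else 0.
Proof.
move=> a_ltN.
have chi_geometric (k : 'I_N) : chi (a * (k : nat)%:Z) = chi a ^+ k.
  by rewrite -chiMn -mulr_natr -natz.
rewrite (eq_bigr _ (fun k _ => chi_geometric k)) {chi_geometric}.
have [->|a_neq0] := eqVneq a 0.
  by rewrite chi0 (eq_bigr (fun=> 1)) ?sumr_const ?card_ord // => k _; rewrite expr1n.
have chia_neq1 : chi a - 1 != 0.
  rewrite subr_eq0; case: a a_neq0 a_ltN => n /= n_neq0 n_ltN.
    by apply: chi_neq1; lia.
  have /chi_neq1 : (0 < n.+1 < N)%N by lia.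
  by rewrite NegzE chiN; apply: contra => /eqP chi_inv1; rewrite -[chi _]invrK chi_inv1 invr1.
have := subrX1 (chi a) N; rewrite chiXN subrr => /esym/eqP.
by rewrite mulf_eq0 (negPf chia_neq1) => /eqP.
Qed.

End Character.

Section Fourier.
Context {R : realType} {N d : nat}.
Hypothesis N_gt0 : (0 < N)%N.
Local Notation chi := (chi R N).

Lemma dotZ_int (x m : ZNd N d) :
  (dotZ x m)%:Z = \sum_(i < d) ((x i : nat)%:Z * (m i : nat)%:Z).
Proof.
rewrite /dotZ (big_morph Posz PoszD (erefl _)).
by apply: eq_bigr => i _; rewrite PoszM.
Qed.

(* The sum over m factors as a product over coordinates of one-dimensional
   geometric sums, each vanishing unless x i = y i. *)
Lemma sum_chi_dotZ_sub (x y : ZNd N d) :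
  \sum_(m : ZNd N d) chi ((dotZ x m)%:Z - (dotZ y m)%:Z)
  = if x == y then N%:R ^+ d else 0.
Proof.
pose c i : int := (x i : nat)%:Z - (y i : nat)%:Z.
have chi_prod (m : ZNd N d) :
    chi ((dotZ x m)%:Z - (dotZ y m)%:Z) = \prod_(i < d) chi (c i * (m i : nat)%:Z).
  rewrite !dotZ_int -sumrB -chi_sum; congr (chi _).
  by apply: eq_bigr => i _; rewrite mulrBl.
rewrite (eq_bigr _ (fun m _ => chi_prod m)).
rewrite -(bigA_distr_bigA (fun i (k : 'I_N) => chi (c i * (k : nat)%:Z))) /=.
have sum_coord (i : 'I_d) :
    \sum_(k < N) chi (c i * (k : nat)%:Z) = if x i == y i then N%:R else 0.
  rewrite sum_chi_mul_ord ?subr_eq0 ?eqz_nat //.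
  by have := ltn_ord (x i); have := ltn_ord (y i); rewrite /c; lia.
rewrite (eq_bigr _ (fun i _ => sum_coord i)).
have [->|x_neq_y] := eqVneq x y.
  by rewrite (eq_bigr (fun=> N%:R)) ?prodr_const ?card_ord // => i _; rewrite eqxx.
have [i xi_neq_yi] : exists i, x i != y i.
  apply/existsP; apply: contraR x_neq_y; rewrite negb_exists => /forallP x_eq_y.
  by apply/eqP/ffunP => i; apply/eqP; rewrite -[_ == _]negbK x_eq_y.
by rewrite (bigD1 i) //= (negPf xi_neq_yi) mul0r.
Qed.

Lemma fourier_inversion (f : ZNd N d -> R[i]) x :
  f x = \sum_m chi (dotZ x m)%:Z * fourier f m.
Proof.
rewrite /fourier.
under eq_bigr => m _ do rewrite mulrCA mulr_sumr.
rewrite -mulr_sumr exchange_big /=.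
under eq_bigr => y _.
  rewrite (eq_bigr (fun m => f y * chi ((dotZ x m)%:Z - (dotZ y m)%:Z))); last first.
    by move=> m _; rewrite chiD; ring.
  rewrite -mulr_sumr sum_chi_dotZ_sub.
over.
rewrite (bigD1 x) //= eqxx big1 ?addr0 => [|y /negPf]; last first.
  by rewrite eq_sym => ->; rewrite mulr0.
by rewrite mulrCA mulVf ?mulr1 // expf_neq0 // pnatr_eq0 -lt0n.
Qed.

Lemma cabs_le_sum_fourier (S : {set ZNd N d}) (f : ZNd N d -> R[i]) x :
  (forall m, m \notin S -> fourier f m = 0) ->
  cabs (f x) <= \sum_(m in S) cabs (fourier f m).
Proof.
move=> f_supp; rewrite {1}(fourier_inversion f x).
apply: le_trans (cabs_sum _ _ _) _.
rewrite (bigID (mem S)) /= [X in _ + X]big1 ?addr0 => [|m /f_supp ->]; last first.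
  by rewrite mulr0; apply/eqP; rewrite cabs_eq0.
by apply: ler_sum => m _; rewrite cabsM cabs_chi mul1r.
Qed.

End Fourier.

Section Means.
Context {R : realType} {T : finType}.

(* Young's inequality a b <= a^r / r + b^q / q for the conjugate exponent q,
   with b = mu^(r-1) for the mean mu, summed over S. *)
Lemma powR_mean_le (S : {set T}) (a : T -> R) (r : R) :
  (0 < #|S|)%N -> (forall m, 0 <= a m) -> 1 <= r ->
  ((\sum_(m in S) a m) / #|S|%:R) `^ r <= #|S|%:R^-1 * \sum_(m in S) a m `^ r.
Proof.
move=> S_gt0 a_ge0 r_ge1.
have A_ge0 : 0 <= \sum_(m in S) a m by apply: sumr_ge0.
have [->|r_neq1] := eqVneq r 1.
  rewrite powRr1 ?divr_ge0 // mulrC.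
  by under [X in _ <= _ * X]eq_bigr => m _ do rewrite powRr1 //.
set n : R := #|S|%:R; set A := \sum_(m in S) a m; set Sq := \sum_(m in S) a m `^ r.
have n_gt0 : 0 < n by rewrite ltr0n.
have r_gt1 : 1 < r by rewrite lt_neqAle eq_sym r_neq1.
have r_gt0 : 0 < r by apply: lt_trans r_gt1.
have r1_gt0 : 0 < r - 1 by rewrite subr_gt0.
set mu := A / n; pose q := r / (r - 1).
have mu_ge0 : 0 <= mu by rewrite divr_ge0 ?(ltW n_gt0).
have rq_conj : r^-1 + q^-1 = 1 by rewrite /q invf_div; field; rewrite gt_eqF.
have young m : a m * mu `^ (r - 1) <= a m `^ r / r + mu `^ r / q.
  have <- : mu `^ (r - 1) `^ q = mu `^ r.
    by rewrite -powRrM /q mulrC divfK ?gt_eqF.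
  by apply: conjugate_powR; rewrite ?powR_ge0 ?divr_gt0.
have sum_young : n * mu `^ r <= Sq / r + n * (mu `^ r / q).
  have -> : n * mu `^ r = A * mu `^ (r - 1).
    by rewrite -mulr_powRB1 // mulrA; congr (_ * _); rewrite /mu mulrCA mulfV ?gt_eqF ?mulr1.
  rewrite mulr_suml mulr_suml; apply: le_trans (ler_sum _ (fun m _ => young m)) _.
  by rewrite big_split /= sumr_const mulr_natl.
rewrite -(ler_pM2l n_gt0) mulrA mulfV ?gt_eqF // mul1r.
set X := n * mu `^ r in sum_young *.
have X_div_q : n * (mu `^ r / q) = X - X / r.
  by rewrite mulrA -/X /q invf_div; field; rewrite gt_eqF.
rewrite X_div_q in sum_young.
have : X / r <= Sq / r by lra.
by rewrite ler_pM2r ?invr_gt0.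
Qed.

Lemma sum_le_card_lq_avg (S : {set T}) (h : T -> R) (q : \bar R) :
  S != finset.set0 -> (forall m, 0 <= h m) -> (1 <= q)%E ->
  \sum_(m in S) h m <= #|S|%:R * lq_avg q S h.
Proof.
move=> S_neq0 h_ge0; have S_gt0 : (0 < #|S|)%N by rewrite card_gt0.
case: q => [r r_ge1|_|//] /=.
  rewrite lee_fin in r_ge1; have r_gt0 : 0 < r by apply: lt_le_trans r_ge1.
  rewrite mulrC -ler_pdivrMr ?ltr0n //.
  set mean := (\sum_(m in S) h m) / #|S|%:R.
  have -> : mean = (mean `^ r) `^ r^-1.
    by rewrite -powRrM mulfV ?lt0r_neq0 // powRr1 // divr_ge0 ?sumr_ge0.
  apply: ge0_ler_powR; rewrite ?invr_ge0 ?nnegrE ?powR_ge0 ?(ltW r_gt0) //.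
    by rewrite mulr_ge0 ?invr_ge0 ?sumr_ge0 // => m _; rewrite powR_ge0.
  exact: powR_mean_le.
have h_le_max m : m \in S -> h m <= \big[Num.max/0]_(m in S) h m.
  by move=> mS; apply: le_bigmax_cond.
by apply: le_trans (ler_sum _ h_le_max) _; rewrite sumr_const mulr_natl.
Qed.

Lemma lp_sum_le_card_support (E : {set T}) (h : T -> R) (p : \bar R) (M : R) :
  (1 <= p)%E -> (forall x, 0 <= h x) -> (forall x, x \notin E -> h x = 0) ->
  (forall x, h x <= M) -> 0 <= M ->
  lp_sum p h <= #|E|%:R `^ inv_exp p * M.
Proof.
move=> + h_ge0 h_supp h_leM M_ge0.
case: p => [r|_|//] /=; last first.
  by rewrite powRr0 mul1r; apply: bigmax_le.
rewrite lee_fin => r_ge1.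
have r_gt0 : 0 < r by apply: lt_le_trans r_ge1.
have sum_le : \sum_x h x `^ r <= #|E|%:R * M `^ r.
  rewrite (bigID (mem E)) /= [X in _ + X]big1 ?addr0 => [|x /h_supp ->]; last first.
    by rewrite powR0 ?gt_eqF.
  have hr_le x : x \in E -> h x `^ r <= M `^ r.
    by move=> _; apply: ge0_ler_powR; rewrite ?nnegrE ?(ltW r_gt0).
  by apply: le_trans (ler_sum _ hr_le) _; rewrite sumr_const mulr_natl.
have sum_ge0 : 0 <= \sum_x h x `^ r by apply: sumr_ge0 => x _; apply: powR_ge0.
apply: le_trans (ge0_ler_powR _ _ _ sum_le) _;
  rewrite ?invr_ge0 ?(ltW r_gt0) ?nnegrE ?mulr_ge0 ?powR_ge0 //.
by rewrite powRM ?powR_ge0 // -powRrM mulfV ?gt_eqF ?powRr1.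
Qed.

End Means.

Theorem theorem3 (R : realType) (N d : nat) (p q : \bar R) (C : R)
    (Sigma E : {set ZNd N d}) (f : ZNd N d -> R[i]) :
  (2 <= N)%N -> (1 <= d)%N ->
  (1 <= p)%E -> (p <= q)%E ->
  Sigma != finset.set0 -> 0 < C ->
  restriction_estimate p q Sigma C ->
  (exists x, f x != 0) ->
  (forall x, x \notin E -> f x = 0) ->
  (forall m, m \notin Sigma -> fourier f m = 0) ->
  (N%:R ^+ d) / C <= (#|E|%:R `^ inv_exp p) * #|Sigma|%:R.
Proof.
move=> N_ge2 _ p_ge1 p_le_q Sigma_neq0 C_gt0 restr [x0 fx0_neq0] f_supp fhat_supp.
have N_gt0 : (0 < N)%N by apply: leq_trans N_ge2.
set D : R := N%:R ^+ d; set Ee := #|E|%:R `^ inv_exp p; set n : R := #|Sigma|%:R.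
pose M := \big[Num.max/0]_x cabs (f x).
have M_gt0 : 0 < M.
  apply: lt_le_trans (le_bigmax _ _ x0).
  by rewrite lt_neqAle eq_sym cabs_eq0 fx0_neq0 cabs_ge0.
have D_gt0 : 0 < D by rewrite exprn_gt0 ?ltr0n.
have fourier_sum_le :=
  sum_le_card_lq_avg Sigma (fun m => cabs (fourier f m)) q Sigma_neq0
    (fun m => cabs_ge0 _) (le_trans p_ge1 p_le_q).
have lp_sum_le : lp_sum p (fun x => cabs (f x)) <= Ee * M.
  apply: lp_sum_le_card_support => // [x|x /f_supp ->|x|]; last exact: ltW.
  - exact: cabs_ge0.
  - by apply/eqP; rewrite cabs_eq0.
  - exact: le_bigmax.
have cabs_le x : cabs (f x) <= n * C * Ee / D * M.
  have -> : n * C * Ee / D * M = n * (C * D^-1 * (Ee * M)).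
    by rewrite !mulrA [n * C * Ee / D]mulrAC.
  apply: le_trans (cabs_le_sum_fourier N_gt0 _ _ x fhat_supp) _.
  apply: le_trans fourier_sum_le _; rewrite ler_pM2l ?ltr0n ?card_gt0 //.
  by apply: le_trans (restr f) _; rewrite ler_pM2l ?mulr_gt0 ?invr_gt0.
have one_le : 1 <= n * C * Ee / D.
  rewrite -(ler_pM2r M_gt0) mul1r.
  by apply: bigmax_le => [|x _]; [apply: le_trans (cabs_ge0 _) (cabs_le x0) | apply: cabs_le].
by move: one_le; rewrite ler_pdivlMr // ler_pdivrMr // mul1r mulrC mulrA.
Qed.
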